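(* Let $V_0$ be a nonlocal vertex algebra such that every $V_0$-module is completely reducible. Regard $V=V_0[[\hbar]]$ as an $\hbar$-adic nonlocal vertex algebra. Then for every simple $V$-module $W$ there is a simple $V_0$-module $W_0$ such that $W\cong W_0[[\hbar]]$ as $V$-modules.
   Context: Let $\hbar$ be a formal variable. A $\mathbb{C}[[\hbar]]$-module is topologically free if it is of the form $W_0[[\hbar]]$ for a complex vector space $W_0$. An ordinary nonlocal vertex algebra $V_0$ (resp. a $V_0$-module $W_0$) makes $V_0[[\hbar]]$ an $\hbar$-adic nonlocal vertex algebra (resp. $W_0[[\hbar]]$ a module over it) by $\mathbb{C}[[\hbar]]$-linear extension. A module over an $\hbar$-adic nonlocal vertex algebra is by definition topologically free. For a $\mathbb{C}[[\hbar]]$-submodule $U$ of a topologically free module $W$, set $[U]=\{w\in W:\hbar^n w\in U\text{ for some }n\ge 1\}$ and let $\overline{U}$ be its $\hbar$-adic closure. Convention: a submodule of a module $W$ over an $\hbar$-adic nonlocal vertex algebra $V$ is a $\mathbb{C}[[\hbar]]$-submodule $W_1$ stable under all operators $u_n$ ($u\in V$) such that $\overline{W_1}=W_1$ and $[W_1]=W_1$; $W$ is simple if $W\ne 0$ and its only submodules are $0$ and $W$. A $V_0$-module is completely reducible if it is a direct sum of simple $V_0$-submodules (equivalently, every submodule has a complementary submodule). *)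

From Stdlib Require Rdefinitions.
From mathcomp Require Import Rstruct.
From HB Require Import structures.
From mathcomp Require Import all_boot all_order all_algebra.
From mathcomp Require Import complex.

Set Implicit Arguments.
Unset Strict Implicit.
Unset Printing Implicit Defensive.

Import Order.TTheory GRing.Theory Num.Theory.
Local Open Scope ring_scope.

Definition C : fieldType := (Rdefinitions.R)[i].

Definition gbin (m : int) (k : nat) : C :=
  (\prod_(i < k) ((m - (i : nat)%:Z)%:~R : C)) / (k`!)%:R.

(* A vertex operator map  Y(u,x)w = sum_n u_n w x^{-n-1}  is encoded  *)
(* by its coefficients:  Y u w n = u_n w.                              *)
Section Ordinary.
Variables (V W : lmodType C).
Implicit Types (Y : V -> W -> int -> W).

Definition bilinearY Y :=
  forall n : int,
    (forall (a : C) u u' w, Y (a *: u + u') w n = a *: Y u w n + Y u' w n) /\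
    (forall (a : C) u w w', Y u (a *: w + w') n = a *: Y u w n + Y u w' n).

(* Y(u,x)w \in W((x)) *)
Definition truncY Y :=
  forall u w, exists N : int, forall n : int, N <= n -> Y u w n = 0.

(* Coefficient of x0^a x2^b in (x0+x2)^l Y_W(u,x0+x2) Y_W(v,x2) w,
   where Y_W(u,x0+x2) is expanded in nonnegative powers of x2; the
   sum over k is truncated at K (it is finite by truncation). *)
Definition assoc_lhs (YW : V -> W -> int -> W) (l : nat) u v w
    (a b : int) (K : nat) : W :=
  \sum_(k < K) gbin (a + (k : nat)%:Z) k *:
     YW u (YW v w ((k : nat)%:Z - 1 - b)) (l%:Z - 1 - (k : nat)%:Z - a).

(* Coefficient of x0^a x2^b in (x0+x2)^l Y_W(Y(u,x0)v,x2) w. *)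
Definition assoc_rhs (YV : V -> V -> int -> V) (YW : V -> W -> int -> W)
    (l : nat) u v w (a b : int) : W :=
  \sum_(j < l.+1) ('C(l, j))%:R *:
     YW (YV u v (l%:Z - (j : nat)%:Z - 1 - a)) w ((j : nat)%:Z - 1 - b).

Definition weak_assoc (YV : V -> V -> int -> V) (YW : V -> W -> int -> W) :=
  forall u v w, exists l : nat, forall a b : int, exists K0 : nat,
    forall K : nat, (K0 <= K)%N -> assoc_lhs YW l u v w a b K = assoc_rhs YV YW l u v w a b.

End Ordinary.

Definition is_nlva (V : lmodType C) (vac : V) (YV : V -> V -> int -> V) :=
  [/\ bilinearY YV, truncY YV,
      (forall v (n : int), YV vac v n = if n == -1 then v else 0),
      (forall v, (forall n : int, 0 <= n -> YV v vac n = 0) /\ YV v vac (-1) = v) &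
      weak_assoc YV YV].

Definition is_module (V : lmodType C) (vac : V) (YV : V -> V -> int -> V)
    (W : lmodType C) (YW : V -> W -> int -> W) :=
  [/\ bilinearY YW, truncY YW,
      (forall w (n : int), YW vac w n = if n == -1 then w else 0) &
      weak_assoc YV YW].

Section OrdSub.
Variables (V W : lmodType C) (YW : V -> W -> int -> W).

Definition submodule (S : W -> Prop) :=
  [/\ S 0, (forall x y, S x -> S y -> S (x + y)),
      (forall (a : C) x, S x -> S (a *: x)) &
      (forall u x (n : int), S x -> S (YW u x n))].

Definition simple_submodule (S : W -> Prop) :=
  [/\ submodule S, (exists x, S x /\ x <> 0) &
      forall T, submodule T -> (forall x, T x -> S x) ->
        (forall x, T x -> x = 0) \/ (forall x, S x -> T x)].

Definition simple_module := simple_submodule (fun _ => True).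

Definition completely_reducible :=
  exists (I : Type) (S : I -> W -> Prop),
    [/\ (forall i, simple_submodule (S i)),
        (forall x, exists (n : nat) (f : 'I_n -> I) (y : 'I_n -> W),
            [/\ injective f, (forall j, S (f j) (y j)) & x = \sum_(j < n) y j]) &
        (forall (n : nat) (f : 'I_n -> I) (y : 'I_n -> W),
            injective f -> (forall j, S (f j) (y j)) ->
            \sum_(j < n) y j = 0 -> forall j, y j = 0)].

End OrdSub.

(* hbar-adic setting.  A topologically free C[[h]]-module is (up to    *)
(* isomorphism) W0[[h]]; its elements are coefficient sequences.       *)
Definition hser (T : Type) := nat -> T.

Section Hadic.
Variables (W0 : lmodType C).

Definition hzero : hser W0 := fun _ => 0.
Definition hadd (x y : hser W0) : hser W0 := fun n => x n + y n.

Definition hscale (c : hser C) (x : hser W0) : hser W0 :=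
  fun n => \sum_(i < n.+1) c i *: x (n - i)%N.

Definition hpow (n : nat) : hser C := fun i => if i == n then 1 else 0.

(* x - y \in h^k W *)
Definition hcongr (k : nat) (x y : hser W0) := forall i, (i < k)%N -> x i = y i.

End Hadic.

Definition hlinear (A B : lmodType C) (f : hser A -> hser B) :=
  (forall x y, f (hadd x y) = hadd (f x) (f y)) /\
  (forall c x, f (hscale c x) = hscale c (f x)).

(* C[[h]]-linear extension of a C-bilinear vertex operator map. *)
Definition hext (V0 W0 : lmodType C) (Y : V0 -> W0 -> int -> W0)
    (u : hser V0) (w : hser W0) (n : int) : hser W0 :=
  fun i => \sum_(j < i.+1) Y (u j) (w (i - j)%N) n.

Definition hconst (V0 : lmodType C) (v : V0) : hser V0 :=
  fun i => if i == 0%N then v else 0.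

Section HModule.
Variables (V0 W : lmodType C) (vac : V0) (YV : V0 -> V0 -> int -> V0).
Variable (YW : hser V0 -> hser W -> int -> hser W).

Definition hassoc_lhs (l : nat) u v w (a b : int) (K : nat) : hser W :=
  fun i => \sum_(k < K) gbin (a + (k : nat)%:Z) k *:
     YW u (YW v w ((k : nat)%:Z - 1 - b)) (l%:Z - 1 - (k : nat)%:Z - a) i.

Definition hassoc_rhs (l : nat) u v w (a b : int) : hser W :=
  fun i => \sum_(j < l.+1) ('C(l, j))%:R *:
     YW (hext YV u v (l%:Z - (j : nat)%:Z - 1 - a)) w ((j : nat)%:Z - 1 - b) i.

Definition is_hmodule :=
  [/\ (forall n u, hlinear (fun w => YW u w n)),
      (forall n w, hlinear (fun u => YW u w n)),
      (* Y_W(u,x)w \in W((x))[[h]] *)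
      (forall u w (k : nat), exists N : int, forall n : int, N <= n ->
          hcongr k (YW u w n) (hzero W)),
      (forall w (n : int), YW (hconst vac) w n = if n == -1 then w else hzero W) &
      (forall u v w (k : nat), exists l : nat, forall a b : int, exists K0 : nat,
          forall K : nat, (K0 <= K)%N ->
            hcongr k (hassoc_lhs l u v w a b K) (hassoc_rhs l u v w a b))].

(* Submodule: C[[h]]-submodule, stable under all u_n, closed
   (h-adic closure = itself) and [S] = S. *)
Definition hsubmodule (S : hser W -> Prop) :=
  [/\ S (hzero W) /\ (forall x y, S x -> S y -> S (hadd x y)),
      (forall c x, S x -> S (hscale c x)),
      (forall u x (n : int), S x -> S (YW u x n)),
      (forall x, (forall k : nat, exists y, S y /\ hcongr k x y) -> S x) &
      (forall x (n : nat), (1 <= n)%N -> S (hscale (hpow n) x) -> S x)].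

Definition simple_hmodule :=
  (exists w, w <> hzero W) /\
  forall S, hsubmodule S -> (forall x, S x -> x = hzero W) \/ (forall x, S x).

End HModule.

Definition hmodule_iso (V0 W W' : lmodType C)
    (YW : hser V0 -> hser W -> int -> hser W)
    (YW' : hser V0 -> hser W' -> int -> hser W') :=
  exists f : hser W -> hser W',
    [/\ hlinear f, bijective f &
        forall u w (n : int), f (YW u w n) = YW' u (f w) n].

From HB Require Import structures.
From mathcomp Require Import all_boot all_order all_algebra.
From Stdlib Require Import FunctionalExtensionality ClassicalEpsilon.

(* Reduction mod h makes W0 := W/hW a V0-module, hence completely reducible;
   pick a simple submodule S of it.  Complete reducibility of each truncation
   W/h^(m+1)W lets one lift the inclusion of S, order by order in h, to a
   V0-homomorphism g : S -> W with g(s) = s mod h.  Its C[[h]]-linear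
   extension S[[h]] -> W is unitriangular, hence injective with a closed and
   h-saturated image; that image is a nonzero submodule, hence all of W by
   simplicity.  Comparing constant terms gives S = W0, and the extension is an
   isomorphism W0[[h]] ~ W. *)

Set Implicit Arguments.
Unset Strict Implicit.
Unset Printing Implicit Defensive.
Import Order.TTheory GRing.Theory Num.Theory.
Local Open Scope ring_scope.

Lemma sum_triangle (R : nmodType) (j : nat) (G : nat -> nat -> nat -> R) :
  \sum_(i < j.+1) \sum_(l < i.+1) G l (i - l)%N (j - i)%N =
  \sum_(l < j.+1) \sum_(m < (j - l).+1) G l m (j - l - m)%N.
Proof.
rewrite -(big_mkord xpredT (fun i => \sum_(l < i.+1) G l (i - l)%N (j - i)%N)).
transitivity (\sum_(0 <= i < j.+1)
    \sum_(0 <= l < j.+1 | (l < i.+1)%N) G l (i - l)%N (j - i)%N).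
  apply: eq_big_nat => i hi.
  rewrite -(big_mkord xpredT (fun l => G l (i - l)%N (j - i)%N)).
  by rewrite (big_nat_widen _ _ j.+1).
rewrite (exchange_big_dep_nat xpredT) //=.
rewrite -(big_mkord xpredT (fun l => \sum_(m < (j - l).+1) G l m (j - l - m)%N)).
apply: eq_big_nat => l hl; rewrite -(big_mkord xpredT (fun m => G l m (j - l - m)%N)).
rewrite (eq_bigl (fun i => xpredT i && (l <= i)%N)) // -(big_nat_widenl l) //.
rewrite -{1}(add0n l) big_addn.
rewrite subSn; last by rewrite -ltnS.
by apply: eq_bigr => i _; rewrite addnK addnC subnDA.
Qed.

Definition hcst (a : C) : hser C := fun i => if i == 0%N then a else 0.

Section HSeries.
Variable X : lmodType C.
Implicit Types (x y : hser X) (k : nat).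

Lemma hscale_hpow k x n :
  hscale (hpow k) x n = if (k <= n)%N then x (n - k)%N else 0.
Proof.
rewrite /hscale /hpow (eq_bigr (fun i : 'I_n.+1 =>
  if i == k :> nat then x (n - i)%N else 0)); last first.
  by move=> i _; case: eqP => _; rewrite ?scale1r ?scale0r.
by rewrite -big_mkcond (big_ord1_eq _ (fun i => x (n - i)%N)) ltnS.
Qed.

Lemma hscale_hcst a x n : hscale (hcst a) x n = a *: x n.
Proof.
rewrite /hscale /hcst (eq_bigr (fun i : 'I_n.+1 =>
  if i == 0%N :> nat then a *: x (n - i)%N else 0)); last first.
  by move=> i _; case: eqP => _; rewrite ?scale0r.
by rewrite -big_mkcond (big_ord1_eq _ (fun i => a *: x (n - i)%N)) subn0.
Qed.

Lemma hscale_hpow_small k x i : (i < k)%N -> hscale (hpow k) x i = 0.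
Proof. by rewrite hscale_hpow ltnNge => /negbTE ->. Qed.

Lemma hcongr_sym k x y : hcongr k x y -> hcongr k y x.
Proof. by move=> h i hi; rewrite h. Qed.

Lemma hcongr_trans k x y z : hcongr k x y -> hcongr k y z -> hcongr k x z.
Proof. by move=> h1 h2 i hi; rewrite h1 ?h2. Qed.

Lemma hcongr_le k k' x y : (k <= k')%N -> hcongr k' x y -> hcongr k x y.
Proof. by move=> hk h i hi; apply/h/(leq_trans hi). Qed.

Lemma hcongr_decomp k x y : hcongr k x y ->
  exists d, y = hadd x (hscale (hpow k) d).
Proof.
move=> h; exists (fun i => y (i + k)%N - x (i + k)%N).
apply: functional_extensionality => i; rewrite /hadd hscale_hpow.
by case: leqP => hk; [rewrite subnK // addrC subrK | rewrite addr0 h].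
Qed.

Lemma hcongr_hexpand x j :
  hcongr j.+1 x (fun p => \sum_(i < j.+1) hscale (hpow i) (hconst (x i)) p).
Proof.
move=> p hp; rewrite (eq_bigr (fun i : 'I_j.+1 =>
  if i == p :> nat then x i else 0)).
  by rewrite -big_mkcond (big_ord1_eq _ x) hp.
move=> i _; rewrite hscale_hpow /hconst subn_eq0.
by case: (ltngtP i p).
Qed.

Lemma hconstD a (v v' : X) :
  hconst (a *: v + v') = hadd (hscale (hcst a) (hconst v)) (hconst v').
Proof.
apply: functional_extensionality => i; rewrite /hadd hscale_hcst /hconst.
by case: eqP => _; rewrite ?scaler0 ?addr0.
Qed.

End HSeries.

Lemma hcongr_diag (A : Type) (X : lmodType C) (D : A -> Prop) (g : nat -> A -> hser X) :
  (forall m a, D a -> hcongr m.+1 (g m.+1 a) (g m a)) ->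
  forall m a, D a -> hcongr m.+1 (fun i => g i a i) (g m a).
Proof.
move=> g_cauchy m a Da.
have gD n d : hcongr n.+1 (g (n + d)%N a) (g n a).
  elim: d => [|d IH]; first by rewrite addn0.
  rewrite addnS; apply: hcongr_trans IH.
  by apply: hcongr_le (g_cauchy _ _ Da); rewrite ltnS leq_addr.
move=> i; rewrite ltnS => im.
by have := gD i (m - i)%N i (ltnSn i); rewrite subnKC // => ->.
Qed.

Lemma iterate_steps (T : Type) (G : nat -> T -> Prop) (R : nat -> T -> T -> Prop) t0 :
  G 0 t0 -> (forall m t, G m t -> exists t', G m.+1 t' /\ R m t t') ->
  exists f : nat -> T, forall m, G m (f m) /\ R m (f m) (f m.+1).
Proof.
move=> G0 step.
have [F FP] : exists F : nat * T -> T, forall mt, G mt.1 mt.2 ->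
    G mt.1.+1 (F mt) /\ R mt.1 mt.2 (F mt).
  apply: (choice (fun mt t' => G mt.1 mt.2 -> G mt.1.+1 t' /\ R mt.1 mt.2 t')) => -[m t].
  by have [/step [t' ?]|] := classic (G m t); [exists t' | exists t].
pose fix f m := if m is m'.+1 then F (m', f m') else t0.
have Gf m : G m (f m) by elim: m => // m /(FP (m, _)) [].
by exists f => m; split => //; apply: (FP (m, f m) (Gf m)).2.
Qed.

Section HLinear.
Variables (X Y : lmodType C) (phi : hser X -> hser Y).
Hypothesis phi_lin : hlinear phi.

Lemma hlinearD x y : phi (hadd x y) = hadd (phi x) (phi y).
Proof. by case: phi_lin. Qed.

Lemma hlinearZ c x : phi (hscale c x) = hscale c (phi x).
Proof. by case: phi_lin. Qed.

Lemma hlinear0 : phi (hzero X) = hzero Y.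
Proof.
have -> : hzero X = hscale (hcst 0) (hzero X).
  by apply: functional_extensionality => i; rewrite hscale_hcst scale0r.
rewrite hlinearZ; apply: functional_extensionality => i.
by rewrite hscale_hcst scale0r.
Qed.

Lemma hlinear_congr k x y : hcongr k x y -> hcongr k (phi x) (phi y).
Proof.
move=> /hcongr_decomp [d ->] i hi.
by rewrite hlinearD hlinearZ /hadd hscale_hpow_small // addr0.
Qed.

Lemma hlinear_sum K (F : 'I_K -> hser X) :
  phi (fun i => \sum_(j < K) F j i) = fun i => \sum_(j < K) phi (F j) i.
Proof.
elim: K F => [|K IH] F.
  have -> : (fun i => \sum_(j < 0) F j i) = hzero X.
    by apply: functional_extensionality => i; rewrite big_ord0.
  by rewrite hlinear0; apply: functional_extensionality => i; rewrite big_ord0.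
have -> : (fun i => \sum_(j < K.+1) F j i) =
    hadd (fun i => \sum_(j < K) F (widen_ord (leqnSn K) j) i) (F ord_max).
  by apply: functional_extensionality => i; rewrite big_ord_recr.
rewrite hlinearD IH; apply: functional_extensionality => i.
by rewrite [RHS]big_ord_recr.
Qed.

Lemma hlinear_coef x (e : nat -> hser X) j :
  hcongr j.+1 x (fun p => \sum_(i < j.+1) hscale (hpow i) (e i) p) ->
  phi x j = \sum_(i < j.+1) phi (e i) (j - i)%N.
Proof.
move=> /hlinear_congr -> //; rewrite hlinear_sum.
by apply: eq_bigr => i _; rewrite hlinearZ hscale_hpow -ltnS ltn_ord.
Qed.

End HLinear.

Lemma hser_neq0 (X : lmodType C) (w : hser X) : w <> hzero X -> exists i, w i <> 0.
Proof.
move=> wnz; apply: NNPP => w0; apply: wnz; apply: functional_extensionality => i.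
by apply: NNPP => wi; apply: w0; exists i.
Qed.

Lemma hmodule_iso_of_inverse (V0 W W' : lmodType C)
    (YW : hser V0 -> hser W -> int -> hser W)
    (YW' : hser V0 -> hser W' -> int -> hser W') (g : hser W' -> hser W) :
  hlinear g -> bijective g -> (forall u w n, g (YW' u w n) = YW u (g w) n) ->
  hmodule_iso YW YW'.
Proof.
move=> g_lin [f gK fK] gY; have g_inj := can_inj gK.
exists f; split; last by move=> u w n; apply: g_inj; rewrite gY !fK.
- by split=> [x y|c x]; apply: g_inj; rewrite ?(hlinearD g_lin) ?(hlinearZ g_lin) !fK.
- exact: (Bijective fK gK).
Qed.

Section Bilinear.
Variables (V M : lmodType C) (Y : V -> M -> int -> M).
Hypothesis Y_bilin : bilinearY Y.

Lemma bilinY0l w n : Y 0 w n = 0.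
Proof.
have [YD _] := Y_bilin n; have := YD 1 0 0 w.
by rewrite !scale1r addr0 => e; apply/(addIr (Y 0 w n)); rewrite add0r -e.
Qed.

Lemma bilinYDr u w w' n : Y u (w + w') n = Y u w n + Y u w' n.
Proof. by have [_ YD] := Y_bilin n; rewrite -{1}[w]scale1r YD scale1r. Qed.

Lemma bilinY0r u n : Y u 0 n = 0.
Proof. by apply/(addrI (Y u 0 n)); rewrite -bilinYDr !addr0. Qed.

Lemma bilinY_sumr (I : Type) (r : seq I) (P : pred I) (F : I -> M) u n :
  Y u (\sum_(i <- r | P i) F i) n = \sum_(i <- r | P i) Y u (F i) n.
Proof.
exact: (big_morph (fun w => Y u w n) (fun w w' => bilinYDr u w w' n) (bilinY0r u n)).
Qed.

End Bilinear.

Section Submodules.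
Variables (V M : lmodType C) (Y : V -> M -> int -> M).
Implicit Types (A B T K N : M -> Prop).

Section Closure.
Variables (T : M -> Prop) (T_sub : submodule Y T).

Lemma submod0 : T 0. Proof. by case: T_sub. Qed.
Lemma submodD x y : T x -> T y -> T (x + y).
Proof. by case: T_sub => _ hD _ _; apply: hD. Qed.
Lemma submodZ a x : T x -> T (a *: x). Proof. by case: T_sub => _ _ hZ _; apply: hZ. Qed.
Lemma submodY u x n : T x -> T (Y u x n). Proof. by case: T_sub => _ _ _ hY; apply: hY. Qed.
Lemma submodN x : T x -> T (- x). Proof. by rewrite -scaleN1r; apply: submodZ. Qed.
Lemma submodB x y : T x -> T y -> T (x - y).
Proof. by move=> Tx Ty; apply/submodD/submodN. Qed.

Lemma submod_sum (I : Type) (r : seq I) (P : pred I) (F : I -> M) :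
  (forall i, P i -> T (F i)) -> T (\sum_(i <- r | P i) F i).
Proof. by move=> TF; apply: big_ind => //; [apply: submod0 | apply: submodD]. Qed.

End Closure.

Lemma submodule_cap A B :
  submodule Y A -> submodule Y B -> submodule Y (fun x => A x /\ B x).
Proof.
move=> hA hB; split.
- by split; apply: submod0.
- by move=> x y [Ax Bx] [Ay By]; split; apply: submodD.
- by move=> a x [Ax Bx]; split; apply: submodZ.
- by move=> u x n [Ax Bx]; split; apply: submodY.
Qed.

Definition addsm A B x := exists a b, [/\ A a, B b & x = a + b].

Hypothesis Y_bilin : bilinearY Y.

Lemma submodule_addsm A B :
  submodule Y A -> submodule Y B -> submodule Y (addsm A B).
Proof.
move=> hA hB; split.
- by exists 0, 0; rewrite addr0; split => //; apply: submod0.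
- move=> x y [a [b [Aa Bb ->]]] [a' [b' [Aa' Bb' ->]]].
  by exists (a + a'), (b + b'); rewrite addrACA; split => //; apply: submodD.
- move=> c x [a [b [Aa Bb ->]]].
  by exists (c *: a), (c *: b); rewrite scalerDr; split => //; apply: submodZ.
- move=> u x n [a [b [Aa Bb ->]]].
  by exists (Y u a n), (Y u b n); rewrite bilinYDr //; split => //; apply: submodY.
Qed.

Section Span.
Variables (n : nat) (T : 'I_n -> M -> Prop).
Hypothesis T_sub : forall j, submodule Y (T j).

Definition spansm (J : {set 'I_n}) x :=
  exists z : 'I_n -> M, (forall j, j \in J -> T j (z j)) /\ x = \sum_(j in J) z j.

Lemma submodule_spansm (J : {set 'I_n}) : submodule Y (spansm J).
Proof.
split.
- exists (fun=> 0); rewrite big1 //.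
  by split => // j _; apply: submod0 (T_sub j).
- move=> x y [z [Tz ->]] [z' [Tz' ->]]; exists (fun j => z j + z' j); rewrite big_split.
  by split => // j Jj; exact: (submodD (T_sub j) (Tz j Jj) (Tz' j Jj)).
- move=> a x [z [Tz ->]]; exists (fun j => a *: z j); rewrite scaler_sumr.
  by split => // j Jj; exact: (submodZ (T_sub j) a (Tz j Jj)).
- move=> u x m [z [Tz ->]]; exists (fun j => Y u (z j) m); rewrite bilinY_sumr //.
  by split => // j Jj; exact: (submodY (T_sub j) u m (Tz j Jj)).
Qed.

Lemma spansm_mem (J : {set 'I_n}) j x : j \in J -> T j x -> spansm J x.
Proof.
move=> Jj Tx; exists (fun i => if i == j then x else 0); split.
  by move=> i _; case: eqP => [->|_] //; apply: submod0.
by rewrite (big_setD1 j) //= eqxx big1 ?addr0 // => i /setD1P [/negbTE ->].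
Qed.

Lemma spansmU1 (J : {set 'I_n}) j x : j \notin J ->
  spansm (j |: J) x -> exists2 y, T j y & spansm J (x - y).
Proof.
move=> Jj [z [Tz ->]]; exists (z j); first by apply/Tz/setU11.
rewrite big_setU1 //= addrC addrK; exists z; split => // i Ji.
by apply/Tz/setU1r.
Qed.

End Span.

(* Choose J maximal with [K] and the span of [T_j, j in J] independent; each
   simple [T_j] must then meet [K + span J], hence lie in it. *)
Lemma simple_family_complement n (T : 'I_n -> M -> Prop) K :
  (forall j, simple_submodule Y (T j)) -> submodule Y K ->
  exists N, [/\ submodule Y N, (forall x, K x -> N x -> x = 0) &
                forall j x, T j x -> addsm K N x].
Proof.
move=> T_simple K_sub; have T_sub j : submodule Y (T j) by case: (T_simple j).
pose indep J := forall x, K x -> spansm T J x -> x = 0.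
pose indepb J := if excluded_middle_informative (indep J) then true else false.
have indepP J : reflect (indep J) (indepb J).
  by rewrite /indepb; case: excluded_middle_informative => h; constructor.
have [J /maxsetP [/indepP indepJ maxJ] _] : {J | maxset indepb J & set0 \subset J}.
  by apply/maxset_exists/indepP => x _ [z [_ ->]]; rewrite big_set0.
exists (spansm T J); split=> [|//|j x Tx]; first exact: (submodule_spansm T_sub).
have [Jj|Jj] := boolP (j \in J).
  exists 0, x; rewrite add0r; split => //; first exact: submod0.
  exact: (spansm_mem T_sub Jj Tx).
have [_ _ Tmin] := T_simple j.
have sub : submodule Y (fun y => T j y /\ addsm K (spansm T J) y).
  exact/submodule_cap/submodule_addsm/(submodule_spansm T_sub).
have [T0|Tall] := Tmin _ sub (fun y => @proj1 _ _); last by case: (Tall x Tx).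
suff /indepP/maxJ/(_ (subsetUr _ _))/setP/(_ j) : indep (j |: J).
  by rewrite setU11 (negbTE Jj).
move=> y Ky /(spansmU1 Jj) [t Tt Jyt].
have t0 : t = 0.
  apply: T0; split => //; exists y, (t - y); rewrite addrCA subrr addr0.
  by split => //; rewrite -opprB; exact: (submodN (submodule_spansm T_sub J) Jyt).
by apply: indepJ => //; rewrite -(subr0 y) -t0.
Qed.


Lemma completely_reducible_simple (x : M) :
  completely_reducible Y -> x <> 0 -> exists S, simple_submodule Y S.
Proof.
move=> [I [T [T_simple T_span _]]] xnz; have [[|n] [f [y [_ _ xE]]]] := T_span x.
  by case: xnz; rewrite xE big_ord0.
by exists (T (f ord0)).
Qed.

End Submodules.

Section SimpleSection.
Variables (V M0 M : lmodType C).
Variables (Y0 : V -> M0 -> int -> M0) (YM : V -> M -> int -> M) (pi : M -> M0).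
Hypothesis piD : forall a q q', pi (a *: q + q') = a *: pi q + pi q'.
Hypothesis piY : forall u q n, pi (YM u q n) = Y0 u (pi q) n.
Variables (S : M0 -> Prop) (N : M -> Prop).
Hypotheses (S_simple : simple_submodule Y0 S) (N_sub : submodule YM N).
Hypothesis pi_inj : forall q, N q -> pi q = 0 -> q = 0.
Hypothesis piN : forall q, N q -> S (pi q).
Hypothesis N_nz : exists2 q, N q & pi q <> 0.

Lemma pi0 : pi 0 = 0.
Proof.
have := piD 1 0 0; rewrite !scale1r addr0 => e.
by apply/(addIr (pi 0)); rewrite add0r -e.
Qed.

Lemma piB q q' : pi (q - q') = pi q - pi q'.
Proof. by rewrite addrC -scaleN1r piD scaleN1r addrC. Qed.

Lemma pi_injN q q' : N q -> N q' -> pi q = pi q' -> q = q'.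
Proof.
move=> Nq Nq' e; apply/eqP; rewrite -subr_eq0; apply/eqP/pi_inj.
  exact: (submodB N_sub Nq Nq').
by rewrite piB e subrr.
Qed.

(* [pi] maps [N] onto a nonzero submodule of [S], hence onto [S], and
   injectively. *)
Lemma simple_section : exists nu : M0 -> M,
  [/\ forall s, S s -> N (nu s), forall s, S s -> pi (nu s) = s,
      forall a s s', S s -> S s' -> nu (a *: s + s') = a *: nu s + nu s' &
      forall u s n, S s -> nu (Y0 u s n) = YM u (nu s) n].
Proof.
have S_sub : submodule Y0 S by case: S_simple.
pose T s := S s /\ exists2 q, N q & pi q = s.
have T_sub : submodule Y0 T.
  split.
  - by split; [exact: (submod0 S_sub)| exists 0; [exact: (submod0 N_sub)| exact: pi0]].
  - move=> x y [Sx [q Nq qx]] [Sy [q' Nq' qy]].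
    split; first exact: (submodD S_sub Sx Sy).
    exists (q + q'); first exact: (submodD N_sub Nq Nq').
    by rewrite -[q]scale1r piD scale1r qx qy.
  - move=> a x [Sx [q Nq qx]]; split; first exact: (submodZ S_sub a Sx).
    exists (a *: q); first exact: (submodZ N_sub a Nq).
    by rewrite -[a *: q]addr0 piD pi0 addr0 qx.
  - move=> u x n [Sx [q Nq qx]]; split; first exact: (submodY S_sub u n Sx).
    by exists (YM u q n); [exact: (submodY N_sub u n Nq)| rewrite piY qx].
have ST s : S s -> T s.
  have [_ _ Smin] := S_simple.
  have [T0|] := Smin T T_sub (fun s => @proj1 _ _); last by move=> ST; apply: ST.
  have [q Nq piq] := N_nz; case: piq; apply: T0; split; [exact: piN | by exists q].
have [nu nuP] : exists nu : M0 -> M, forall s, S s -> N (nu s) /\ pi (nu s) = s.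
  apply: (choice (fun s q => S s -> N q /\ pi q = s)) => s.
  have [Ss|nSs] := classic (S s); last by exists 0.
  by have [_ [q Nq qs]] := ST s Ss; exists q => _; split.
have nuN s : S s -> N (nu s) by case/nuP.
have nuK s : S s -> pi (nu s) = s by case/nuP.
exists nu; split => // [a s s' Ss Ss' | u s n Ss].
  have Sas := submodD S_sub (submodZ S_sub a Ss) Ss'.
  apply: pi_injN; first exact: nuN.
    exact: (submodD N_sub (submodZ N_sub a (nuN _ Ss)) (nuN _ Ss')).
  by rewrite piD !nuK.
have SY := submodY S_sub u n Ss.
apply: pi_injN; [exact: nuN | exact: (submodY N_sub u n (nuN _ Ss))|].
by rewrite piY !nuK.
Qed.

End SimpleSection.

Lemma hext_hconst (V M : lmodType C) (Y : V -> M -> int -> M) u w n :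
  bilinearY Y -> hext Y (hconst u) (hconst w) n = hconst (Y u w n).
Proof.
move=> Y_bilin; apply: functional_extensionality => -[|i]; first by rewrite /hext big_ord1.
rewrite /hext /hconst big1 // => j _.
by case: eqP => [->|_]; [rewrite subn0 bilinY0r | rewrite bilinY0l].
Qed.

Section Truncation.
Variables (W : lmodType C) (m : nat).

Definition Wtrunc : lmodType C := {ffun 'I_m.+1 -> W}.
Definition untrunc (q : Wtrunc) : hser W :=
  fun i => if (i < m.+1)%N then q (inord i) else 0.
Definition trunc (x : hser W) : Wtrunc := [ffun i : 'I_m.+1 => x i].

Lemma truncK q : trunc (untrunc q) = q.
Proof. by apply/ffunP => i; rewrite ffunE /untrunc ltn_ord inord_val. Qed.

Lemma trunc_congr x y : hcongr m.+1 x y -> trunc x = trunc y.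
Proof. by move=> h; apply/ffunP => i; rewrite !ffunE h. Qed.

Lemma untruncK x : hcongr m.+1 (untrunc (trunc x)) x.
Proof. by move=> i hi; rewrite /untrunc hi ffunE inordK. Qed.

Lemma truncD a x y : trunc (fun i => a *: x i + y i) = a *: trunc x + trunc y.
Proof. by apply/ffunP => i; rewrite !ffunE. Qed.

Lemma untruncD a q q' i :
  untrunc (a *: q + q') i = a *: untrunc q i + untrunc q' i.
Proof. by rewrite /untrunc; case: ifP; rewrite ?ffunE ?scaler0 ?addr0. Qed.

Lemma untrunc0 i : untrunc 0 i = 0.
Proof. by rewrite /untrunc; case: ifP; rewrite ?ffunE. Qed.

Definition divisible_hpow k (q : Wtrunc) := hcongr k (untrunc q) (hzero W).

End Truncation.
Arguments divisible_hpow {W m} k q.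

Section HModule.
Variables (V0 : lmodType C) (vac : V0) (YV : V0 -> V0 -> int -> V0).
Hypothesis HV : is_nlva vac YV.
Variables (W : lmodType C) (YW : hser V0 -> hser W -> int -> hser W).
Hypothesis HW : is_hmodule vac YV YW.

Lemma YW_hlinear_r u n : hlinear (fun w => YW u w n). Proof. by case: HW. Qed.
Lemma YW_hlinear_l w n : hlinear (fun u => YW u w n). Proof. by case: HW. Qed.

Lemma YW_congr k u u' w w' n : hcongr k u u' -> hcongr k w w' ->
  hcongr k (YW u w n) (YW u' w' n).
Proof.
move=> /(hlinear_congr (YW_hlinear_l w n)) uu' /(hlinear_congr (YW_hlinear_r u' n)).
exact: hcongr_trans.
Qed.

(* Any [Q] with maps [lift] and [tr] identifying it with W[[h]] / h^(m+1) W[[h]]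
   inherits a module structure over V0. *)
Section Reduction.
Variables (Q : lmodType C) (m : nat) (lift : Q -> hser W) (tr : hser W -> Q).
Hypothesis trK : forall q, tr (lift q) = q.
Hypothesis tr_congr : forall x y, hcongr m.+1 x y -> tr x = tr y.
Hypothesis liftK : forall x, hcongr m.+1 (lift (tr x)) x.
Hypothesis trD : forall a x y, tr (fun i => a *: x i + y i) = a *: tr x + tr y.

Definition Yred (u : V0) (q : Q) (n : int) : Q := tr (YW (hconst u) (lift q) n).

Lemma tr0 : tr (hzero W) = 0.
Proof.
have := trD 1 (hzero W) (hzero W); rewrite scale1r.
have -> : (fun i => 1 *: hzero W i + hzero W i) = hzero W.
  by apply: functional_extensionality => i; rewrite /hzero scaler0 addr0.
by move=> e; apply/(addIr (tr (hzero W))); rewrite add0r -e.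
Qed.

Lemma tr_sum K (c : 'I_K -> C) (z : 'I_K -> hser W) :
  tr (fun i => \sum_(j < K) c j *: z j i) = \sum_(j < K) c j *: tr (z j).
Proof.
elim: K c z => [|K IH] c z.
  rewrite big_ord0 -tr0; congr tr.
  by apply: functional_extensionality => i; rewrite big_ord0.
have -> : (fun i => \sum_(j < K.+1) c j *: z j i) = fun i =>
    c ord_max *: z ord_max i +
    \sum_(j < K) c (widen_ord (leqnSn K) j) *: z (widen_ord (leqnSn K) j) i.
  by apply: functional_extensionality => i; rewrite big_ord_recr addrC.
by rewrite trD IH big_ord_recr addrC.
Qed.

Lemma tr_hadd x y : tr (hadd x y) = tr x + tr y.
Proof.
rewrite -[tr x]scale1r -trD; congr tr.
by apply: functional_extensionality => i; rewrite scale1r.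
Qed.

Lemma tr_hscale a x : tr (hscale (hcst a) x) = a *: tr x.
Proof.
rewrite -[_ *: _]addr0 -tr0 -trD; congr tr; apply: functional_extensionality => i.
by rewrite hscale_hcst addr0.
Qed.

Lemma Yred_module : is_module vac YV Yred.
Proof.
have [_ _ YW_trunc YW_vac YW_assoc] := HW.
split.
- move=> n; split=> [a u u' w | a u w w'].
    rewrite /Yred hconstD (hlinearD (YW_hlinear_l _ n)).
    by rewrite (hlinearZ (YW_hlinear_l _ n)) tr_hadd tr_hscale.
  have lift_lin : hcongr m.+1 (lift (a *: w + w'))
                            (hadd (hscale (hcst a) (lift w)) (lift w')).
    by rewrite -{1}[w]trK -{1}[w']trK -tr_hscale -tr_hadd.
  rewrite /Yred (tr_congr (YW_congr n (fun i _ => erefl) lift_lin)).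
  by rewrite (hlinearD (YW_hlinear_r _ n)) (hlinearZ (YW_hlinear_r _ n)) tr_hadd tr_hscale.
- move=> u w; have [N hN] := YW_trunc (hconst u) (lift w) m.+1.
  by exists N => n hn; rewrite /Yred (tr_congr (hN n hn)) tr0.
- by move=> w n; rewrite /Yred YW_vac; case: eqP => _; rewrite ?trK ?tr0.
- move=> u v w; have [l hl] := YW_assoc (hconst u) (hconst v) (lift w) m.+1.
  exists l => a b; have [K0 hK0] := hl a b; exists K0 => K hK.
  have := tr_congr (hK0 K hK); rewrite /hassoc_lhs /hassoc_rhs !tr_sum => e.
  apply: etrans (etrans _ e) _; apply: eq_bigr => k _; congr (_ *: _).
    by apply: tr_congr; apply: YW_congr => //; apply: liftK.
  have [YV_bilin _ _ _ _] := HV.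
  by rewrite /Yred hext_hconst.
Qed.

End Reduction.

Definition Ybar : V0 -> W -> int -> W := Yred (@hconst W) (fun x => x 0%N).

Lemma Ybar_module : is_module vac YV Ybar.
Proof.
apply: (@Yred_module _ 0) => // [x y|x]; first exact.
by move=> i; rewrite ltnS leqn0 => /eqP ->.
Qed.

Definition Ytrunc m : V0 -> Wtrunc W m -> int -> Wtrunc W m :=
  Yred (@untrunc W m) (@trunc W m).
Arguments Ytrunc : clear implicits.

Lemma Ytrunc_module m : is_module vac YV (Ytrunc m).
Proof.
exact: (Yred_module (@truncK W m) (@trunc_congr W m) (@untruncK W m) (@truncD W m)).
Qed.

Lemma untrunc_Ytrunc0 m u q n : untrunc (Ytrunc m u q n) 0 = Ybar u (untrunc q 0) n.
Proof.
rewrite (untruncK _ (ltn0Sn m)); apply: YW_congr (ltn0Sn 0) => // i.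
by rewrite ltnS leqn0 => /eqP ->.
Qed.

Lemma submodule_divisible_hpow k m : (k <= m.+1)%N ->
  submodule (Ytrunc m) (divisible_hpow k : Wtrunc W m -> Prop).
Proof.
move=> km; split.
- by move=> i _; rewrite untrunc0.
- by move=> q q' hq hq' i hi; rewrite -[q]scale1r untruncD hq // hq' // scaler0 addr0.
- by move=> a q hq i hi; rewrite -[a *: q]addr0 untruncD hq // untrunc0 scaler0 addr0.
- move=> u q n hq; apply: hcongr_trans (hcongr_le km (untruncK _)) _.
  by rewrite -(hlinear0 (YW_hlinear_r (hconst u) n)); apply: YW_congr.
Qed.

Section Lifting.
Variable S : W -> Prop.
Hypothesis S_simple : simple_submodule Ybar S.
Hypothesis HCR : forall (M : lmodType C) (YM : V0 -> M -> int -> M),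
  is_module vac YV YM -> completely_reducible YM.

Lemma S_sub : submodule Ybar S. Proof. by case: S_simple. Qed.

(* [g] restricted to [S] is a section of the reduction mod h which is a
   homomorphism of V0-modules modulo h^(m+1). *)
Definition approx_hom m (g : W -> hser W) :=
  [/\ forall a s s', S s -> S s' ->
        hcongr m.+1 (g (a *: s + s')) (hadd (hscale (hcst a) (g s)) (g s')),
      forall s, S s -> g s 0%N = s &
      forall u s n, S s -> hcongr m.+1 (g (Ybar u s n)) (YW (hconst u) (g s) n)].

Lemma approx_hom_hconst : approx_hom 0 (@hconst W).
Proof.
split=> // [a s s' _ _|u s n _ i]; first by rewrite hconstD.
by rewrite ltnS leqn0 => /eqP ->.
Qed.

Section Step.
Variables (m : nat) (g : W -> hser W).
Hypothesis g_approx : approx_hom m g.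

Lemma approx_hom0 : hcongr m.+1 (g 0) (hzero W).
Proof.
have [gD _ _] := g_approx; move=> i hi.
have := gD 1 0 0 (submod0 S_sub) (submod0 S_sub) i hi.
rewrite scale1r addr0 /hadd hscale_hcst scale1r => e.
by apply/(addIr (g 0 i)); rewrite add0r -e.
Qed.

Definition approx_image (q : Wtrunc W m.+1) :=
  exists2 s, S s & hcongr m.+1 (untrunc q) (g s).

Lemma approx_image_witness (q : Wtrunc W m.+1) s :
  S s -> hcongr m.+1 (untrunc q) (g s) -> s = untrunc q 0.
Proof. by have [_ g0 _] := g_approx; move=> Ss /(_ 0%N isT) ->; rewrite g0. Qed.

Lemma divisible_approx_image (q : Wtrunc W m.+1) : divisible_hpow m.+1 q -> approx_image q.
Proof.
move=> hq; exists 0; first exact: (submod0 S_sub).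
exact: hcongr_trans hq (hcongr_sym approx_hom0).
Qed.

Lemma submodule_approx_image : submodule (Ytrunc m.+1) approx_image.
Proof.
have [gD _ gY] := g_approx; split.
- exact/divisible_approx_image/(submod0 (submodule_divisible_hpow (leqnSn _))).
- move=> q q' [s Ss hs] [s' Ss' hs']; exists (s + s').
    exact: (submodD S_sub Ss Ss').
  move=> i hi; rewrite -[q]scale1r untruncD -[s]scale1r (gD _ _ _ Ss Ss' i hi).
  by rewrite /hadd hscale_hcst hs // hs'.
- move=> a q [s Ss hs]; exists (a *: s + 0).
    exact: (submodD S_sub (submodZ S_sub a Ss) (submod0 S_sub)).
  move=> i hi; rewrite -[a *: q]addr0 untruncD untrunc0.
  by rewrite (gD _ _ _ Ss (submod0 S_sub) i hi) /hadd hscale_hcst hs // approx_hom0.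
- move=> u q n [s Ss hs]; exists (Ybar u s n); first exact: (submodY S_sub u n Ss).
  apply: hcongr_trans (hcongr_le (leqnSn _) (untruncK _)) _.
  apply: hcongr_trans (YW_congr n (fun i _ => erefl) hs) _.
  exact/hcongr_sym/gY.
Qed.

(* A complement [N] of h^(m+1) Q in the completely reducible module
   Q = W[[h]] / h^(m+2) meets the approximate image of [g] in a copy of [S]. *)
Lemma exists_lift_section : exists nu : W -> Wtrunc W m.+1,
  [/\ forall s, S s -> approx_image (nu s),
      forall s, S s -> untrunc (nu s) 0 = s,
      forall a s s', S s -> S s' -> nu (a *: s + s') = a *: nu s + nu s' &
      forall u s n, S s -> nu (Ybar u s n) = Ytrunc m.+1 u (nu s) n].
Proof.
have [_ [s0 [Ss0 s0nz]] _] := S_simple.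
have [Ytr_bilin _ _ _] := Ytrunc_module m.+1.
have K_sub := submodule_divisible_hpow (leqnSn m.+1).
have [I [T [T_simple T_span _]]] := HCR (Ytrunc_module m.+1).
pose x := trunc m.+1 (g s0).
have [n [f [y [_ Ty xE]]]] := T_span x.
have [N [N_sub KN0 TKN]] :=
  simple_family_complement Ytr_bilin (fun j => T_simple (f j)) K_sub.
have [k [a [Kk Na xka]]] : addsm (divisible_hpow m.+1) N x.
  rewrite xE; apply: (submod_sum (submodule_addsm Ytr_bilin K_sub N_sub)) => j _.
  exact: TKN (Ty j).
have Px : approx_image x.
  by exists s0 => //; apply: hcongr_le (leqnSn _) (untruncK _).
have N'_sub := submodule_cap submodule_approx_image N_sub.
have piN q : approx_image q /\ N q -> S (untrunc q 0).
  by case=> [[s Ss hs] _]; rewrite -(approx_image_witness Ss hs).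
have pi_inj q : approx_image q /\ N q -> untrunc q 0 = 0 -> q = 0.
  case=> [[s Ss hs] Nq] q0; apply: KN0 Nq.
  have s_eq0 : s = 0 by rewrite (approx_image_witness Ss hs).
  by rewrite s_eq0 in hs; apply: hcongr_trans hs approx_hom0.
have N'_nz : exists2 q, approx_image q /\ N q & untrunc q 0 <> 0.
  have [_ g0 _] := g_approx.
  have ak : a = x - k by rewrite xka addrC addKr.
  exists a.
    split => //; rewrite ak.
    exact: (submodB submodule_approx_image Px (divisible_approx_image Kk)).
  rewrite ak -scaleN1r addrC untruncD (Kk 0%N isT) scaler0 add0r.
  by rewrite (untruncK _ (ltn0Sn _)) g0.
have [nu [nuN nuK nuD nuY]] := simple_section (fun _ _ _ => untruncD _ _ _ _)
  (@untrunc_Ytrunc0 m.+1) S_simple N'_sub pi_inj piN N'_nz.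
by exists nu; split => // s /nuN [].
Qed.

Lemma approx_hom_succ : exists g',
  approx_hom m.+1 g' /\ forall s, S s -> hcongr m.+1 (g' s) (g s).
Proof.
have [nu [nuP nuK nuD nuY]] := exists_lift_section.
exists (fun s => untrunc (nu s)); split; first split.
- by move=> a s s' Ss Ss' i _; rewrite nuD // untruncD /hadd hscale_hcst.
- exact: nuK.
- by move=> u s n Ss; rewrite nuY //; apply: untruncK.
- move=> s Ss; have [s' Ss' hs'] := nuP s Ss.
  have e : s' = s by rewrite (approx_image_witness Ss' hs') nuK.
  by rewrite e in hs'.
Qed.

End Step.

Lemma exists_hom_lift : exists g : W -> hser W,
  [/\ forall a s s', S s -> S s' -> g (a *: s + s') = hadd (hscale (hcst a) (g s)) (g s'),
      forall s, S s -> g s 0%N = s &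
      forall u s n, S s -> g (Ybar u s n) = YW (hconst u) (g s) n].
Proof.
have [f fP] := iterate_steps
  (R := fun m g g' => forall s, S s -> hcongr m.+1 (g' s) (g s))
  approx_hom_hconst approx_hom_succ.
have f_lim := hcongr_diag (fun m s Ss => (fP m).2 s Ss).
exists (fun s i => f i s i); split.
- move=> a s s' Ss Ss'; apply: functional_extensionality => i.
  have [fD _ _] := (fP i).1.
  by rewrite (fD a s s' Ss Ss' i (ltnSn i)) /hadd !hscale_hcst.
- by move=> s Ss; have [_ f0 _] := (fP 0%N).1; apply: f0.
- move=> u s n Ss; apply: functional_extensionality => i.
  have [_ _ fY] := (fP i).1.
  rewrite (fY u s n Ss i (ltnSn i)).
  exact: YW_congr (fun _ _ => erefl) (hcongr_sym (f_lim i s Ss)) _ (ltnSn i).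
Qed.

Section Extension.
Variable g : W -> hser W.
Hypothesis gD : forall a s s', S s -> S s' ->
  g (a *: s + s') = hadd (hscale (hcst a) (g s)) (g s').
Hypothesis g0 : forall s, S s -> g s 0%N = s.
Hypothesis gY : forall u s n, S s -> g (Ybar u s n) = YW (hconst u) (g s) n.

Lemma gDi a s s' i : S s -> S s' -> g (a *: s + s') i = a *: g s i + g s' i.
Proof. by move=> Ss Ss'; rewrite gD // /hadd hscale_hcst. Qed.

Lemma g_zero : g 0 = hzero W.
Proof.
apply: functional_extensionality => i; have S0 := submod0 S_sub.
have := gDi 1 i S0 S0; rewrite scale1r addr0 scale1r => e.
by apply/(addIr (g 0 i)); rewrite add0r -e.
Qed.

Lemma gZi a s i : S s -> g (a *: s) i = a *: g s i.
Proof.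
by move=> Ss; rewrite -[a *: s]addr0 gDi ?g_zero ?addr0 //; apply: submod0 S_sub.
Qed.

Lemma g_sum (I : Type) (r : seq I) (P : pred I) (F : I -> W) i :
  (forall j, P j -> S (F j)) ->
  g (\sum_(j <- r | P j) F j) i = \sum_(j <- r | P j) g (F j) i.
Proof.
move=> SF; suff [] : S (\sum_(j <- r | P j) F j) /\
    g (\sum_(j <- r | P j) F j) i = \sum_(j <- r | P j) g (F j) i by [].
apply: (big_ind2 (fun x y => S x /\ g x i = y)) => //.
- by rewrite g_zero; split => //; apply: submod0 S_sub.
- move=> x y x' y' [Sx <-] [Sx' <-]; split; first exact: (submodD S_sub Sx Sx').
  by rewrite -[x]scale1r gDi ?scale1r.
- by move=> j Pj; split => //; apply: SF.
Qed.

Definition Sseries (s : hser W) := forall i, S (s i).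

Definition gext (s : hser W) : hser W := fun j => \sum_(i < j.+1) g (s i) (j - i)%N.

Lemma gext_last s j : Sseries s ->
  gext s j = s j + \sum_(i < j) g (s i) (j - i)%N.
Proof. by move=> Ss; rewrite /gext big_ord_recr /= subnn g0 // addrC. Qed.

Lemma gext_congr k s s' : hcongr k s s' -> hcongr k (gext s) (gext s').
Proof.
move=> h j hj; apply: eq_bigr => i _; rewrite h //.
by apply: leq_ltn_trans hj; rewrite -ltnS.
Qed.

(* [gext] is unitriangular: the j-th coefficient of [gext s] is [s j] plus a
   function of the earlier coefficients. *)
Lemma gext_congrK k s s' : Sseries s -> Sseries s' ->
  hcongr k (gext s) (gext s') -> hcongr k s s'.
Proof.
move=> Ss Ss'; elim: k => [//|k IH] h.
have {}IH := IH (hcongr_le (leqnSn k) h).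
move=> j; rewrite ltnS leq_eqVlt => /orP [/eqP ->|hj]; last exact: IH.
have := h k (ltnSn k); rewrite !gext_last //.
by under eq_bigr => i _ do rewrite IH //; move/addIr.
Qed.

Lemma gext_inj s s' : Sseries s -> Sseries s' -> gext s = gext s' -> s = s'.
Proof.
move=> Ss Ss' e; apply: functional_extensionality => i.
by apply: (gext_congrK (k := i.+1) Ss Ss') => //; rewrite e.
Qed.

Lemma gext_hzero : gext (hzero W) = hzero W.
Proof.
by apply: functional_extensionality => j; rewrite /gext big1 // => i _; rewrite g_zero.
Qed.

Lemma gext_hadd s s' :
  Sseries s -> Sseries s' -> gext (hadd s s') = hadd (gext s) (gext s').
Proof.
move=> Ss Ss'; apply: functional_extensionality => j.
rewrite /gext /hadd -big_split; apply: eq_bigr => i _.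
by rewrite -[s i]scale1r gDi ?scale1r.
Qed.

Lemma Sseries_hscale c s : Sseries s -> Sseries (hscale c s).
Proof. by move=> Ss i; apply: (submod_sum S_sub) => l _; apply: (submodZ S_sub). Qed.

Lemma gext_hscale c s : Sseries s -> gext (hscale c s) = hscale c (gext s).
Proof.
move=> Ss; apply: functional_extensionality => j.
rewrite /gext /hscale.
transitivity (\sum_(i < j.+1) \sum_(l < i.+1) c l *: g (s (i - l)%N) (j - i)%N).
  apply: eq_bigr => i _; rewrite g_sum => [|l _]; last exact: (submodZ S_sub).
  by apply: eq_bigr => l _; rewrite gZi.
rewrite (sum_triangle j (fun l m p => c l *: g (s m) p)).
by apply: eq_bigr => l _; rewrite scaler_sumr.
Qed.

Lemma Sseries_hext u s n : Sseries s -> Sseries (hext Ybar u s n).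
Proof. by move=> Ss i; apply: (submod_sum S_sub) => l _; apply: (submodY S_sub). Qed.

Lemma gext_hexpand s j : Sseries s ->
  hcongr j.+1 (gext s) (fun p => \sum_(m < j.+1) hscale (hpow m) (g (s m)) p).
Proof.
move=> Ss p hp; rewrite /gext (big_ord_widen j.+1 (fun m => g (s m) (p - m)%N) hp).
by rewrite big_mkcond; apply: eq_bigr => m _; rewrite hscale_hpow ltnS.
Qed.

Lemma gext_hext u s n : Sseries s -> gext (hext Ybar u s n) = YW u (gext s) n.
Proof.
move=> Ss; apply: functional_extensionality => j.
rewrite {1}/gext /hext.
transitivity (\sum_(i < j.+1) \sum_(l < i.+1)
    YW (hconst (u l)) (g (s (i - l)%N)) n (j - i)%N).
  apply: eq_bigr => i _; rewrite g_sum => [|l _]; last exact: (submodY S_sub).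
  by apply: eq_bigr => l _; rewrite gY.
rewrite (sum_triangle j (fun l m p => YW (hconst (u l)) (g (s m)) n p)).
have /= -> := hlinear_coef (YW_hlinear_l (gext s) n) (e := fun i => hconst (u i))
  (hcongr_hexpand u (j:=j)).
apply: eq_bigr => l _.
by have /= -> := hlinear_coef (YW_hlinear_r (hconst (u l)) n) (e := fun m => g (s m))
  (gext_hexpand Ss (j:=(j - l)%N)).
Qed.

Definition gext_image (w : hser W) := exists2 s, Sseries s & w = gext s.

Lemma gext_image_closed w :
  (forall k, exists y, gext_image y /\ hcongr k w y) -> gext_image w.
Proof.
move=> approx.
have [sk skP] : exists sk : nat -> hser W,
    forall k, Sseries (sk k) /\ hcongr k w (gext (sk k)).
  apply: (choice (fun k s => Sseries s /\ hcongr k w (gext s))) => k.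
  by have [_ [[s Ss ->] h]] := approx k; exists s.
have sk_stable i k : (i < k)%N -> sk k i = sk i.+1 i.
  move=> ik; apply: (gext_congrK (skP k).1 (skP i.+1).1) (ltnSn i).
  apply: hcongr_trans (hcongr_sym (hcongr_le ik (skP k).2)) (skP i.+1).2.
exists (fun i => sk i.+1 i) => [i|]; first exact: (skP i.+1).1.
apply: functional_extensionality => j; rewrite ((skP j.+1).2 j (ltnSn j)).
by apply: gext_congr (ltnSn j) => i ij; rewrite sk_stable.
Qed.

Lemma gext_image_saturated w n :
  gext_image (hscale (hpow n) w) -> gext_image w.
Proof.
case=> s Ss e.
have s_small : hcongr n s (hzero W).
  apply: gext_congrK => // [i|i hi]; first exact: (submod0 S_sub).
  by rewrite -e gext_hzero hscale_hpow_small.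
have Ss' : Sseries (fun i => s (i + n)%N) by move=> i; apply: Ss.
have es : s = hscale (hpow n) (fun i => s (i + n)%N).
  apply: functional_extensionality => i; rewrite hscale_hpow.
  by case: leqP => h; [rewrite subnK | rewrite s_small].
exists (fun i => s (i + n)%N) => //; apply: functional_extensionality => i.
have /= := congr1 (fun f => f (i + n)%N) e.
by rewrite {1}es gext_hscale // !hscale_hpow leq_addl addnK.
Qed.

Lemma hsubmodule_gext_image : hsubmodule YW gext_image.
Proof.
have S0 : Sseries (hzero W) by move=> i; apply: (submod0 S_sub).
split.
- split; first by exists (hzero W); rewrite ?gext_hzero.
  move=> _ _ [s Ss ->] [s' Ss' ->]; exists (hadd s s'); last by rewrite gext_hadd.
  by move=> i; apply: (submodD S_sub).
- move=> c _ [s Ss ->]; exists (hscale c s); first exact: Sseries_hscale.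
  by rewrite gext_hscale.
- move=> u _ n [s Ss ->]; exists (hext Ybar u s n); first exact: Sseries_hext.
  by rewrite gext_hext.
- exact: gext_image_closed.
- by move=> w n _; apply: gext_image_saturated.
Qed.

End Extension.

Lemma Ybar_simple_iso :
  simple_hmodule YW -> simple_module Ybar /\ hmodule_iso YW (hext Ybar).
Proof.
move=> [_ YW_simple]; have [g [gD g0 gY]] := exists_hom_lift.
have [_ [s0 [Ss0 s0nz]] Smin] := S_simple.
have gext0 s : Sseries s -> gext g s 0 = s 0.
  by move=> Ss; rewrite gext_last // big_ord0 addr0.
have image_all w : gext_image g w.
  have [img0|] := YW_simple _ (hsubmodule_gext_image gD g0 gY); last exact.
  have Ss0' : Sseries (hconst s0) by move=> [|i] //; apply: (submod0 S_sub).
  case: s0nz; rewrite -[s0]/(hconst s0 0) -gext0 //.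
  by rewrite (img0 _ (ex_intro2 _ _ _ Ss0' erefl)).
have S_all w : S w.
  by have [s Ss e] := image_all (hconst w); rewrite -[w]/(hconst w 0) e gext0.
have Sser s : Sseries s by move=> i; apply: S_all.
split.
  split=> [||T T_sub _]; [by split | by exists s0 |].
  by have [T0|ST] := Smin T T_sub (fun x _ => S_all x); [left | right => x _; apply: ST].
have [f fK] : exists f, forall w, gext g (f w) = w.
  apply: (choice (fun w s => gext g s = w)) => w.
  by have [s _ ->] := image_all w; exists s.
apply: (hmodule_iso_of_inverse (g := gext g)).
- by split=> [s s'|c s]; [apply: (gext_hadd gD) | apply: (gext_hscale gD)].
- by exists f => // s; apply: (gext_inj g0) => //; rewrite fK.
- by move=> u s n; apply: (gext_hext gD gY).
Qed.

End Lifting.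

End HModule.

Theorem lemma3p5 (V0 : lmodType C) (vac : V0) (YV : V0 -> V0 -> int -> V0)
  (HV : is_nlva vac YV)
  (HCR : forall (M : lmodType C) (YM : V0 -> M -> int -> M),
      is_module vac YV YM -> completely_reducible YM)
  (W : lmodType C) (YW : hser V0 -> hser W -> int -> hser W)
  (HW : is_hmodule vac YV YW) (Hsimple : simple_hmodule YW) :
  exists (M : lmodType C) (YM : V0 -> M -> int -> M),
    [/\ is_module vac YV YM, simple_module YM &
        hmodule_iso YW (hext YM)].
Proof.
have [[w /hser_neq0 [i wi]] _] := Hsimple.
have Ybar_mod := Ybar_module HV HW.
have [S S_simple] := completely_reducible_simple (HCR _ _ Ybar_mod) wi.
have [Ybar_simple Ybar_iso] := Ybar_simple_iso HV HW S_simple HCR Hsimple.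
by exists W, (Ybar YW).
Qed.
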